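(* Let $m\ge 1$, $r\ge 1$, and for a multi-index $\alpha=(\alpha_1,\dots,\alpha_r)\in\mathbb Z_{\ge 0}^r$ put $|\alpha|=\sum_{l=1}^r\alpha_l$ and $w(\alpha)=\sum_{l=1}^r l\,\alpha_l$. For $0\le k\le j$ define the polynomials $$\mathcal M^{(r)}_{k,j}(t_1,\dots,t_r)=\sum_{|\alpha|=k,\ w(\alpha)=j}\frac{k!}{\alpha_1!\cdots\alpha_r!}\prod_{l=1}^r t_l^{\alpha_l},$$ i.e. $\mathcal M^{(r)}_{k,j}$ is the coefficient of $\varepsilon^j$ in $\big(\sum_{l=1}^r t_l\varepsilon^l\big)^k$, and set $\mathcal M^{(r)}_{k,j}=0$ for $k>j$. Consider an $\varepsilon$-dependent family of $\mathfrak{gl}_m(\mathbb C)$-valued connection matrices of the form $$A(\lambda)=\sum_{k=0}^{r-1}\frac{B_k}{(\lambda-u)^{k+1}}+\frac{C}{\lambda-v}+(\text{terms holomorphic at }\lambda=u\text{ and }\lambda=v),\qquad B_k=\sum_{j=k}^{r-1}A_j\,\mathcal M^{(r-1)}_{k,j}(t_1,\dots,t_{r-1}),$$ where $$v=u+\sum_{i=1}^r t_i\varepsilon^i,$$ and assume that, as $\varepsilon\to0$, there are $\varepsilon$-independent matrices $W^{[j]}$ ($j\ge -r$) and $A^{[k,l]}$ ($0\le k\le r-1$, $l\ge 0$) with asymptotic expansions $$C\sim\sum_{j=-r}^{\infty}W^{[j]}\varepsilon^j,\qquad A_k\sim-\sum_{l=1}^{r-k}\frac{W^{[-k-l]}}{\varepsilon^l}+A^{[k,0]}+\sum_{l=1}^\infty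 A^{[k,l]}\varepsilon^l\quad(0\le k\le r-1),$$ the holomorphic terms having a finite limit. Then the limit $\varepsilon\to0$ of the connection exists and equals $$\tilde A(\lambda)=\sum_{i=0}^{r}\frac{\tilde B_i(t_1,\dots,t_r)}{(\lambda-u)^{i+1}}+(\text{holomorphic terms}),\qquad \tilde B_i=\sum_{k=i}^{r}\tilde A_k\,\mathcal M^{(r)}_{i,k}(t_1,\dots,t_r),$$ where $\tilde A_k=W^{[-k]}+A^{[k,0]}$ for $k<r$ and $\tilde A_r=W^{[-r]}$.
   Context: The matrices $A_j,C,W^{[j]},A^{[k,l]}$ are $m\times m$ complex matrices (possibly depending on further variables), $u$ and $t_1,\dots,t_r$ are complex parameters and $\varepsilon$ is a small complex parameter; $\lambda$ is the spectral variable on $\mathbb{CP}^1$. *)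

From Stdlib Require Import Reals ZArith List Arith.
From Coquelicot Require Export Coquelicot.
Export ListNotations.

Open Scope C_scope.

(** m x m complex matrices, represented entrywise; only the entries
    [M i j] with [i, j < m] are meaningful. All operations occurring in the
    statement (sums, multiplication by scalars, limits, asymptotic expansions)
    are entrywise. *)
Definition Mat := nat -> nat -> C.

Definition csum (f : nat -> C) (a b : nat) : C :=
  if (b <? a)%nat then 0 else sum_n_m f a b.

Definition Cpowz (e : C) (z : Z) : C :=
  match z with
  | Z0 => 1
  | Zpos p => Cpow e (Pos.to_nat p)
  | Zneg p => / Cpow e (Pos.to_nat p)
  end.

Fixpoint idx_lists (n b : nat) : list (list nat) :=
  match n with
  | O => [ [] ]
  | S n' => flat_map (fun a => map (cons a) (idx_lists n' b)) (seq 0 (S b))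
  end.

Fixpoint abs_idx (al : list nat) : nat :=
  match al with [] => O | a :: l => (a + abs_idx l)%nat end.

Fixpoint wgt_from (s : nat) (al : list nat) : nat :=
  match al with [] => O | a :: l => (s * a + wgt_from (S s) l)%nat end.

Definition wgt (al : list nat) : nat := wgt_from 1 al.

Fixpoint fact_prod (al : list nat) : nat :=
  match al with [] => 1%nat | a :: l => (fact a * fact_prod l)%nat end.

Fixpoint mon_from (t : nat -> C) (s : nat) (al : list nat) : C :=
  match al with [] => 1 | a :: l => Cpow (t s) a * mon_from t (S s) l end.

(** The parameters are t 1, ..., t r.
    (Every multi-index with |alpha| = k has all entries <= k, so summing over
    [idx_lists r k] covers all of them.) *)
Definition Mpoly (r : nat) (t : nat -> C) (k j : nat) : C :=
  if (k <=? j)%nat then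
    fold_right Cplus 0
      (map (fun al => RtoC (INR (fact k) / INR (fact_prod al)) * mon_from t 1 al)
         (filter (fun al => andb (abs_idx al =? k)%nat (wgt al =? j)%nat)
            (idx_lists r k)))
  else 0.

(** [asymp f lo c] : f(eps) ~ sum_{n >= -lo} c(n) eps^n as eps -> 0 (eps complex,
    eps <> 0), in the sense of Poincare: for every N >= 0,
       f(eps) - sum_{n=-lo}^{N} c(n) eps^n = o(eps^N). *)
Definition asymp (f : C -> C) (lo : nat) (c : Z -> C) : Prop :=
  forall N : nat,
    filterlim
      (fun e => (f e - csum (fun p => c (Z.of_nat p - Z.of_nat lo)%Z
                                      * Cpowz e (Z.of_nat p - Z.of_nat lo)%Z)
                           0 (lo + N)) / Cpow e N)
      (locally' (0 : C)) (locally (0 : C)).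

Definition holo_at (g : C -> C) (z0 : C) : Prop :=
  exists d : posreal, forall z : C, Cmod (z - z0) < d ->
    ex_derive (K := C_AbsRing) (V := C_NormedModule) g z.

Definition vpt (r : nat) (u : C) (t : nat -> C) (e : C) : C :=
  u + csum (fun i => t i * Cpow e i) 1 r.

Definition Bk (r : nat) (t : nat -> C) (A : nat -> C -> Mat) (k : nat) (e : C) : Mat :=
  fun a b => csum (fun j => A j e a b * Mpoly (r - 1) t k j) k (r - 1).

Definition conn (r : nat) (u : C) (t : nat -> C) (A : nat -> C -> Mat)
    (Cm : C -> Mat) (H : C -> C -> Mat) (e lam : C) : Mat :=
  fun a b =>
    csum (fun k => Bk r t A k e a b / Cpow (lam - u) (S k)) 0 (r - 1)
    + Cm e a b / (lam - vpt r u t e) + H e lam a b.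

(** coefficients of the expansion of A_k:
    -W^{[-k-l]} at eps^{-l} (1 <= l <= r-k), A^{[k,n]} at eps^n (n >= 0) *)
Definition Acoefs (W : Z -> Mat) (Ac : nat -> nat -> Mat) (k : nat) (a b : nat)
    (n : Z) : C :=
  if (n <? 0)%Z then - W (n - Z.of_nat k)%Z a b else Ac k (Z.to_nat n) a b.

Definition Atil (r : nat) (W : Z -> Mat) (Ac : nat -> nat -> Mat) (k : nat) : Mat :=
  fun a b => if (k <? r)%nat then W (- Z.of_nat k)%Z a b + Ac k 0%nat a b
             else W (- Z.of_nat r)%Z a b.

Definition Btil (r : nat) (t : nat -> C) (W : Z -> Mat) (Ac : nat -> nat -> Mat)
    (i : nat) : Mat :=
  fun a b => csum (fun k => Atil r W Ac k a b * Mpoly r t i k) i r.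

(* Write [D = lam - u] and [delta e = v - u = sum_i t_i e^i].  Since [delta^n = sum_p M_{n,p} e^p],
   the geometric series gives [1 / (D - delta) = sum_{p <= r} g_p e^p + o(e^r)] with
   [g_p = sum_n M_{n,p} / D^(n+1)].  Exchanging sums (and using [M^{(r-1)}_{k,p} = M^{(r)}_{k,p}]
   for [p < r]), the connection is
     [sum_{p < r} (A_p + e^p C) g_p + (e^r C) g_r + (e^r C) o(1) + H].
   The poles of [A_p] cancel those of [e^p C], so [A_p + e^p C -> W^{[-p]} + A^{[p,0]}], and
   [e^r C -> W^{[-r]}]; the limit [sum_{p <= r} Atil_p g_p] is [sum_i Btil_i / D^(i+1)], again by
   exchanging sums. *)

From Stdlib Require Import Reals ZArith List Arith Lia Lra.
From Coquelicot Require Import Coquelicot.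
Open Scope C_scope.

Fixpoint fsum (f : nat -> C) (n : nat) : C :=
  match n with O => 0 | S n => fsum f n + f n end.

Lemma fsum_ext (f g : nat -> C) n :
  (forall i, (i < n)%nat -> f i = g i) -> fsum f n = fsum g n.
Proof.
  induction n as [|n IH]; intros Hfg; simpl; [easy|].
  rewrite IH, Hfg; auto.
Qed.

Lemma fsum_eq0 (f : nat -> C) n : (forall i, (i < n)%nat -> f i = 0) -> fsum f n = 0.
Proof.
  induction n as [|n IH]; intros Hf; simpl; [easy|].
  rewrite IH, Hf by auto. ring.
Qed.

Lemma fsum_plus (f g : nat -> C) n : fsum (fun i => f i + g i) n = fsum f n + fsum g n.
Proof. induction n as [|n IH]; simpl; [ring|]. rewrite IH; ring. Qed.

Lemma fsum_scal_l (c : C) (f : nat -> C) n : fsum (fun i => c * f i) n = c * fsum f n.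
Proof. induction n as [|n IH]; simpl; [ring|]. rewrite IH; ring. Qed.

Lemma fsum_scal_r (c : C) (f : nat -> C) n : fsum (fun i => f i * c) n = fsum f n * c.
Proof. induction n as [|n IH]; simpl; [ring|]. rewrite IH; ring. Qed.

Lemma fsum_add (f : nat -> C) n k : fsum f (n + k) = fsum f n + fsum (fun i => f (n + i)%nat) k.
Proof.
  induction k as [|k IH]; simpl; [rewrite Nat.add_0_r; ring|].
  rewrite Nat.add_succ_r; simpl. rewrite IH; ring.
Qed.

Lemma fsum_S (f : nat -> C) n : fsum f (S n) = fsum f n + f n.
Proof. reflexivity. Qed.

Lemma fsum_Sl (f : nat -> C) n : fsum f (S n) = f O + fsum (fun i => f (S i)) n.
Proof. change (S n) with (1 + n)%nat. rewrite fsum_add. simpl. ring. Qed.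

Lemma fsum_swap (f : nat -> nat -> C) n k :
  fsum (fun i => fsum (f i) k) n = fsum (fun j => fsum (fun i => f i j) n) k.
Proof.
  induction n as [|n IH]; simpl; [symmetry; apply fsum_eq0; auto|].
  rewrite IH, <- fsum_plus; easy.
Qed.

Lemma fsum_delta (c : C) k n : (k < n)%nat -> fsum (fun i => if (i =? k)%nat then c else 0) n = c.
Proof.
  intros Hk. replace n with (k + S (n - S k))%nat by lia.
  rewrite fsum_add, fsum_Sl, fsum_eq0, fsum_eq0, Nat.add_0_r, Nat.eqb_refl; [ring| |].
  - intros i _. destruct (Nat.eqb_spec (k + S i) k); [lia|easy].
  - intros i Hi. destruct (Nat.eqb_spec i k); [lia|easy].
Qed.

Lemma fsum_drop_zeros (f : nat -> C) k n : (k <= n)%nat -> (forall p, (p < k)%nat -> f p = 0) ->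
  fsum (fun i => f (k + i)%nat) (n - k) = fsum f n.
Proof.
  intros Hkn Hf. replace n with (k + (n - k))%nat at 2 by lia.
  rewrite fsum_add, (fsum_eq0 f k) by auto. ring.
Qed.

Lemma csum_fsum (f : nat -> C) a b : csum f a b = fsum (fun i => f (a + i)%nat) (S b - a).
Proof.
  unfold csum. destruct (Nat.ltb_spec b a) as [Hba|Hab].
  { replace (S b - a)%nat with O by lia. easy. }
  replace b with (a + (b - a))%nat at 1 by lia. replace (S b - a)%nat with (S (b - a)) by lia.
  induction (b - a)%nat as [|n IH].
  - rewrite Nat.add_0_r, sum_n_n. simpl. rewrite Nat.add_0_r. ring.
  - rewrite Nat.add_succ_r, sum_n_Sm by lia. rewrite IH. simpl.
    rewrite Nat.add_succ_r. easy.
Qed.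

(* For [|z - l| < |l|/2] we have [|z| > |l|/2], hence
   [|/z - /l| = |z - l|/(|z||l|) < 2|z - l|/|l|^2]. *)
Lemma Cinv_continuous (l : C) : l <> 0 -> filterlim Cinv (locally l) (locally (/ l)).
Proof.
  intros Hl. apply filterlim_locally. intros [eps Heps]. simpl.
  assert (Hm : (0 < Cmod l)%R) by (apply Cmod_gt_0; exact Hl).
  apply (@locally_le_locally_norm C_AbsRing C_NormedModule).
  assert (Hd : (0 < Rmin (Cmod l / 2) (eps * Cmod l * Cmod l / 2))%R).
  { apply Rmin_pos; [lra|]. apply Rmult_lt_0_compat; [|lra].
    apply Rmult_lt_0_compat; [apply Rmult_lt_0_compat|]; lra. }
  exists (mkposreal _ Hd). intros z Hz.
  change (Cmod (z - l) < Rmin (Cmod l / 2) (eps * Cmod l * Cmod l / 2))%R in Hz.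
  assert (Hz1 : (Cmod (z - l) < Cmod l / 2)%R) by (eapply Rlt_le_trans; [exact Hz | apply Rmin_l]).
  assert (Hz2 : (Cmod (z - l) < eps * Cmod l * Cmod l / 2)%R)
    by (eapply Rlt_le_trans; [exact Hz | apply Rmin_r]).
  assert (Hzl : (Cmod l / 2 < Cmod z)%R).
  { assert (Htr := Cmod_triangle z (l - z)). replace (z + (l - z)) with l in Htr by ring.
    replace (l - z) with (- (z - l)) in Htr by ring. rewrite Cmod_opp in Htr. lra. }
  assert (Hz0 : (z : C) <> 0) by (intros ->; rewrite Cmod_0 in Hzl; lra).
  apply (@norm_compat1 C_AbsRing C_NormedModule). change (Cmod (/ z - / l) < eps)%R.
  replace (/ z - / l) with (- (z - l) * / z * / l) by (field; auto).
  rewrite !Cmod_mult, Cmod_opp, !Cmod_inv by auto.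
  apply Rmult_lt_reg_r with (Cmod z * Cmod l)%R; [apply Rmult_lt_0_compat; lra|].
  replace (Cmod (z - l) * / Cmod z * / Cmod l * (Cmod z * Cmod l))%R with (Cmod (z - l))
    by (field; lra).
  assert (eps * (Cmod l / 2) * Cmod l < eps * (Cmod z * Cmod l))%R
    by (rewrite Rmult_assoc; apply Rmult_lt_compat_l; nra).
  lra.
Qed.

Section Limits.
Context {T : Type} {F : (T -> Prop) -> Prop} {FF : Filter F}.
Implicit Types (f g : T -> C) (l lf lg : C).

Lemma lim_Cplus f g lf lg : filterlim f F (locally lf) -> filterlim g F (locally lg) ->
  filterlim (fun x => f x + g x) F (locally (lf + lg)).
Proof.
  intros Hf Hg. apply (filterlim_comp_2 f g Cplus Hf Hg).
  apply (@filterlim_plus C_AbsRing C_NormedModule).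
Qed.

Lemma lim_Cmult f g lf lg : filterlim f F (locally lf) -> filterlim g F (locally lg) ->
  filterlim (fun x => f x * g x) F (locally (lf * lg)).
Proof.
  intros Hf Hg P HP. apply locally_C in HP.
  refine (filterlim_comp_2 f g (@mult C_AbsRing) _ _ (filterlim_mult lf lg) _ HP);
    intros Q HQ; [apply Hf | apply Hg]; apply locally_C; exact HQ.
Qed.

Lemma lim_Copp f l : filterlim f F (locally l) -> filterlim (fun x => - f x) F (locally (- l)).
Proof.
  intros Hf. replace (- l) with (-1 * l) by ring.
  eapply filterlim_ext; [|apply (lim_Cmult _ _ _ _ (filterlim_const (-1 : C)) Hf)].
  intros x; simpl; ring.
Qed.

Lemma lim_Cminus f g lf lg : filterlim f F (locally lf) -> filterlim g F (locally lg) ->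
  filterlim (fun x => f x - g x) F (locally (lf - lg)).
Proof. intros Hf Hg. apply lim_Cplus; [exact Hf | apply lim_Copp; exact Hg]. Qed.

Lemma lim_Cpow f l n :
  filterlim f F (locally l) -> filterlim (fun x => f x ^ n) F (locally (l ^ n)).
Proof.
  intros Hf. induction n as [|n IH]; simpl; [apply filterlim_const | apply lim_Cmult; auto].
Qed.

Lemma lim_fsum (f : nat -> T -> C) (l : nat -> C) n :
  (forall i, (i < n)%nat -> filterlim (f i) F (locally (l i))) ->
  filterlim (fun x => fsum (fun i => f i x) n) F (locally (fsum l n)).
Proof.
  induction n as [|n IH]; intros Hf; simpl; [apply filterlim_const|].
  apply lim_Cplus; auto.
Qed.

Lemma lim_Cinv f l : filterlim f F (locally l) -> l <> 0 ->
  filterlim (fun x => / f x) F (locally (/ l)).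
Proof. intros Hf Hl. exact (filterlim_comp _ _ _ f Cinv F _ _ Hf (Cinv_continuous l Hl)). Qed.

Lemma lim_Cdiv f g lf lg : filterlim f F (locally lf) -> filterlim g F (locally lg) -> lg <> 0 ->
  filterlim (fun x => f x / g x) F (locally (lf / lg)).
Proof. intros Hf Hg Hlg. apply lim_Cmult; [exact Hf | apply lim_Cinv; assumption]. Qed.

Lemma lim_eventually_neq0 f l : filterlim f F (locally l) -> l <> 0 -> F (fun x => f x <> 0).
Proof.
  intros Hf Hl. apply (Hf (fun z => z <> 0)), (@locally_le_locally_norm C_AbsRing C_NormedModule).
  exists (mkposreal _ (proj1 (Cmod_gt_0 l) Hl)). intros z Hz ->.
  change (Cmod (0 - l) < Cmod l)%R in Hz.
  replace (0 - l) with (- l) in Hz by ring. rewrite Cmod_opp in Hz. lra.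
Qed.

End Limits.

Lemma locally'_neq (x : C) : locally' x (fun e => e <> x).
Proof. unfold locally', within. apply filter_forall. easy. Qed.

Lemma lim_id0 : filterlim (fun e : C => e) (locally' (0 : C)) (locally (0 : C)).
Proof. intros P HP. apply filter_imp with (2 := HP); auto. Qed.

Lemma lim_poly0 (c : nat -> C) N :
  filterlim (fun e => fsum (fun p => c p * e ^ p) N) (locally' (0 : C))
    (locally (fsum (fun p => c p * 0 ^ p) N)).
Proof.
  apply lim_fsum. intros p _. apply lim_Cmult; [apply filterlim_const | apply lim_Cpow, lim_id0].
Qed.

(** * The multinomial coefficients [M^{(r)}_{k,j}] *)

Lemma Cbinomial (x y : C) k :
  (x + y) ^ k = fsum (fun a => RtoC (Binomial.C k a) * x ^ a * y ^ (k - a)) (S k).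
Proof.
  assert (HC0 : forall n, RtoC (Binomial.C n 0) = 1).
  { intros n. unfold Binomial.C. rewrite Nat.sub_0_r. simpl. f_equal. field.
    apply INR_fact_neq_0. }
  assert (HCn : forall n, RtoC (Binomial.C n n) = 1).
  { intros n. unfold Binomial.C. rewrite Nat.sub_diag. simpl. f_equal. field.
    apply INR_fact_neq_0. }
  induction k as [|k IH]; [simpl; rewrite HC0; ring|].
  change ((x + y) ^ S k) with ((x + y) * (x + y) ^ k).
  rewrite IH, Cmult_plus_distr_r, <- !fsum_scal_l.
  set (term := fun n a => RtoC (Binomial.C n a) * x ^ a * y ^ (n - a)).
  change (fsum (fun i => x * term k i) (S k) + fsum (fun i => y * term k i) (S k)
          = fsum (term (S k)) (S (S k))).
  rewrite (fsum_Sl (term (S k))), (fsum_Sl (fun i => y * term k i)).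
  simpl fsum.
  rewrite (fsum_ext (fun i => term (S k) (S i)) (fun i => x * term k i + y * term k (S i))).
  2:{ intros i Hi. unfold term. rewrite <- Binomial.pascal, RtoC_plus by exact Hi.
      replace (S k - S i)%nat with (k - i)%nat by lia.
      replace (k - i)%nat with (S (k - S i)) by lia. simpl. ring. }
  rewrite fsum_plus. unfold term. rewrite !HC0, !HCn, !Nat.sub_0_r, !Nat.sub_diag. simpl. ring.
Qed.

Definition lsum {X : Type} (g : X -> C) (L : list X) : C := fold_right Cplus 0 (map g L).

Section ListSums.
Context {X : Type}.
Implicit Types (g h : X -> C) (L : list X).

Lemma lsum_app g L1 L2 : lsum g (L1 ++ L2) = lsum g L1 + lsum g L2.
Proof. unfold lsum. induction L1 as [|x L1 IH]; simpl; [ring|]. rewrite IH; ring. Qed.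

Lemma lsum_ext g h L : (forall x, In x L -> g x = h x) -> lsum g L = lsum h L.
Proof.
  unfold lsum. induction L as [|x L IH]; intros Hgh; simpl; [easy|].
  f_equal; auto with datatypes.
Qed.

Lemma lsum_eq0 g L : (forall x, In x L -> g x = 0) -> lsum g L = 0.
Proof.
  unfold lsum. induction L as [|x L IH]; intros Hg; simpl; [easy|].
  rewrite Hg, IH; [ring | intros; apply Hg | ]; simpl; auto.
Qed.

Lemma lsum_scal_l (c : C) g L : lsum (fun x => c * g x) L = c * lsum g L.
Proof. unfold lsum. induction L as [|x L IH]; simpl; [ring|]. rewrite IH; ring. Qed.

Lemma lsum_filter (P : X -> bool) g L :
  lsum g (filter P L) = lsum (fun x => if P x then g x else 0) L.
Proof.
  unfold lsum. induction L as [|x L IH]; simpl; [easy|].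
  destruct (P x); simpl; rewrite IH; ring.
Qed.

Lemma lsum_fsum (g : X -> nat -> C) L n :
  lsum (fun x => fsum (g x) n) L = fsum (fun j => lsum (fun x => g x j) L) n.
Proof.
  unfold lsum. induction L as [|x L IH]; simpl; [symmetry; apply fsum_eq0; auto|].
  rewrite IH, <- fsum_plus. easy.
Qed.

End ListSums.

Lemma lsum_idx_lists_S (g : list nat -> C) n b :
  lsum g (idx_lists (S n) b) = fsum (fun a => lsum (fun al => g (a :: al)) (idx_lists n b)) (S b).
Proof.
  cbn [idx_lists]. induction (S b) as [|c IH]; [easy|].
  rewrite seq_S, flat_map_app, lsum_app, IH. simpl.
  rewrite app_nil_r. unfold lsum. rewrite map_map. easy.
Qed.

Lemma idx_lists_length n b al : In al (idx_lists n b) -> length al = n.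
Proof.
  revert al. induction n as [|n IH]; cbn [idx_lists]; intros al Hal.
  - destruct Hal as [<-|[]]; easy.
  - apply in_flat_map in Hal as [a [_ Ha]]. apply in_map_iff in Ha as [l [<- Hl]].
    simpl. rewrite (IH l Hl). easy.
Qed.

Lemma abs_idx_le_wgt_from s al : (1 <= s)%nat -> (abs_idx al <= wgt_from s al)%nat.
Proof.
  revert s. induction al as [|a al IH]; simpl; intros s Hs; [lia|].
  specialize (IH (S s)). nia.
Qed.

Lemma wgt_from_le s al : (wgt_from s al <= (s + length al) * abs_idx al)%nat.
Proof.
  revert s. induction al as [|a al IH]; simpl; intros s; [lia|].
  specialize (IH (S s)). nia.
Qed.

Ltac decide_nat_tests :=
  repeat match goal with
  | |- context [Nat.eqb ?x ?y] => destruct (Nat.eqb_spec x y)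
  | |- context [Nat.leb ?x ?y] => destruct (Nat.leb_spec x y)
  end; simpl; first [ring | exfalso; lia].

Section Multinomial.
Variable t : nat -> C.

(* Multi-indices are indexed from [s], i.e. [alpha_1] is paired with [t s]; this makes the
   recursion on the first entry possible. *)
Definition mterm (s : nat) (al : list nat) : C := RtoC (/ INR (fact_prod al)) * mon_from t s al.

Definition mcoef (n s b k j : nat) : C :=
  lsum (fun al => if andb (abs_idx al =? k) (wgt_from s al =? j) then mterm s al else 0)
    (idx_lists n b).

Lemma mterm_cons s a al : mterm s (a :: al) = RtoC (/ INR (fact a)) * t s ^ a * mterm (S s) al.
Proof. unfold mterm. simpl. rewrite mult_INR, Rinv_mult, RtoC_mult. ring. Qed.

Lemma mcoef_O s b k j : mcoef 0 s b k j = if andb (k =? 0) (j =? 0) then 1 else 0.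
Proof.
  unfold mcoef, lsum, mterm. simpl.
  destruct k, j; simpl; rewrite ?Rinv_1; ring.
Qed.

Lemma mcoef_S n s b k j : mcoef (S n) s b k j =
  fsum (fun a => if andb (a <=? k) (s * a <=? j)
                 then RtoC (/ INR (fact a)) * t s ^ a * mcoef n (S s) b (k - a) (j - s * a)
                 else 0) (S b).
Proof.
  unfold mcoef at 1. rewrite lsum_idx_lists_S. apply fsum_ext. intros a _.
  destruct (Nat.leb_spec a k), (Nat.leb_spec (s * a) j); simpl;
    [| apply lsum_eq0; intros al _; simpl; decide_nat_tests ..].
  unfold mcoef. rewrite <- lsum_scal_l. apply lsum_ext. intros al _. simpl.
  rewrite mterm_cons. decide_nat_tests.
Qed.

Lemma mcoef_trunc n : forall s b k j, (1 <= s)%nat -> (j < s + n)%nat ->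
  mcoef (S n) s b k j = mcoef n s b k j.
Proof.
  induction n as [|n IH]; intros s b k j Hs Hj; rewrite mcoef_S.
  - rewrite fsum_Sl, fsum_eq0, Nat.mul_0_r, !Nat.sub_0_r, !mcoef_O.
    + simpl. rewrite Rinv_1. destruct (k =? 0)%nat, (j =? 0)%nat; simpl; ring.
    + intros a _. destruct (Nat.leb_spec (s * S a) j); [lia|]. now rewrite Bool.andb_false_r.
  - rewrite mcoef_S. apply fsum_ext. intros a _.
    destruct (andb (a <=? k) (s * a <=? j)); [rewrite IH by lia|]; easy.
Qed.

Lemma mcoef_below n s b k j : (1 <= s)%nat -> (j < k)%nat -> mcoef n s b k j = 0.
Proof.
  intros Hs Hjk. apply lsum_eq0. intros al _.
  pose proof (abs_idx_le_wgt_from s al Hs). decide_nat_tests.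
Qed.

Section Generating.
Variable e : C.

Definition mgen (n s b k : nat) : C :=
  lsum (fun al => if (abs_idx al =? k)%nat then mterm s al * e ^ wgt_from s al else 0)
    (idx_lists n b).

Lemma mgen_O s b k : mgen 0 s b k = if (k =? 0)%nat then 1 else 0.
Proof. unfold mgen, lsum, mterm. destruct k; simpl; rewrite ?Rinv_1; ring. Qed.

Lemma mgen_S n s b k : mgen (S n) s b k =
  fsum (fun a => if (a <=? k)%nat
                 then RtoC (/ INR (fact a)) * (t s * e ^ s) ^ a * mgen n (S s) b (k - a)
                 else 0) (S b).
Proof.
  unfold mgen at 1. rewrite lsum_idx_lists_S. apply fsum_ext. intros a _.
  destruct (Nat.leb_spec a k); [| apply lsum_eq0; intros al _; simpl; decide_nat_tests].
  unfold mgen. rewrite <- lsum_scal_l. apply lsum_ext. intros al _. simpl.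
  rewrite mterm_cons, Cpow_add_r, Cpow_mult_r, Cpow_mult_l. decide_nat_tests.
Qed.

Lemma mgen_multinomial n : forall s b k, (k <= b)%nat ->
  RtoC (INR (fact k)) * mgen n s b k = fsum (fun i => t (s + i)%nat * e ^ (s + i)) n ^ k.
Proof.
  induction n as [|n IH]; intros s b k Hkb.
  { rewrite mgen_O. destruct k; simpl; ring. }
  rewrite mgen_S, (fsum_Sl (fun i => t (s + i)%nat * _)), Nat.add_0_r.
  rewrite (fsum_ext (fun i => t (s + S i)%nat * e ^ (s + S i))
                    (fun i => t (S s + i)%nat * e ^ (S s + i)))
    by (intros i _; cbv beta; now rewrite Nat.add_succ_r).
  rewrite Cbinomial, <- fsum_scal_l.
  replace (S b) with (S k + (b - k))%nat by lia.
  rewrite fsum_add, (fsum_eq0 _ (b - k)), Cplus_0_r.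
  2:{ intros i _. destruct (Nat.leb_spec (S k + i) k); [lia | ring]. }
  apply fsum_ext. intros a Ha. destruct (Nat.leb_spec a k); [|lia].
  rewrite <- (IH (S s) b (k - a)%nat) by lia.
  unfold Binomial.C, Rdiv. rewrite Rinv_mult, !RtoC_mult, !RtoC_inv by apply INR_fact_neq_0.
  field. split; intros Hc; apply RtoC_inj in Hc; revert Hc; apply INR_fact_neq_0.
Qed.

Lemma mgen_by_weight n s b k J : ((s + n) * k <= J)%nat ->
  fsum (fun j => mcoef n s b k j * e ^ j) (S J) = mgen n s b k.
Proof.
  intros HJ. unfold mcoef, mgen.
  rewrite (fsum_ext _ (fun j => lsum (fun al =>
             if andb (abs_idx al =? k) (wgt_from s al =? j) then mterm s al * e ^ j else 0)
             (idx_lists n b))).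
  2:{ intros j _. rewrite Cmult_comm, <- lsum_scal_l. apply lsum_ext. intros al _.
      destruct (andb _ _); ring. }
  rewrite <- lsum_fsum. apply lsum_ext. intros al Hal.
  destruct (Nat.eqb_spec (abs_idx al) k) as [Hk|Hk]; cbn [andb]; [|apply fsum_eq0; easy].
  rewrite <- (fsum_delta (mterm s al * e ^ wgt_from s al) (wgt_from s al) (S J)).
  - apply fsum_ext. intros j _.
    destruct (Nat.eqb_spec (wgt_from s al) j), (Nat.eqb_spec j (wgt_from s al)); subst; easy || lia.
  - pose proof (wgt_from_le s al). rewrite (idx_lists_length n b al Hal) in *. nia.
Qed.

End Generating.
End Multinomial.

Definition delta (r : nat) (t : nat -> C) (e : C) : C := fsum (fun i => t (S i) * e ^ S i) r.

Lemma Mpoly_mcoef r t k j :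
  Mpoly r t k j = if (k <=? j)%nat then RtoC (INR (fact k)) * mcoef t r 1 k k j else 0.
Proof.
  unfold Mpoly, mcoef. destruct (k <=? j)%nat; [|easy].
  change (fold_right Cplus 0 (map ?g ?L)) with (lsum g L).
  rewrite lsum_filter, <- lsum_scal_l. apply lsum_ext. intros al _.
  unfold wgt, mterm, Rdiv. destruct (andb _ _); [rewrite RtoC_mult; ring | ring].
Qed.

Lemma Mpoly_below r t k j : (j < k)%nat -> Mpoly r t k j = 0.
Proof. intros Hjk. unfold Mpoly. destruct (Nat.leb_spec k j); [lia | easy]. Qed.

(* Only multi-indices with [alpha_(r+1) = 0] have weight [j <= r]. *)
Lemma Mpoly_trunc r t k j : (j <= r)%nat -> Mpoly r t k j = Mpoly (S r) t k j.
Proof. intros Hj. rewrite !Mpoly_mcoef, mcoef_trunc by lia. easy. Qed.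

Lemma Mpoly_expand r t (e : C) k J : ((1 + r) * k <= J)%nat ->
  fsum (fun p => Mpoly r t k p * e ^ p) (S J) = delta r t e ^ k.
Proof.
  intros HJ. rewrite (fsum_ext _ (fun p => RtoC (INR (fact k)) * (mcoef t r 1 k k p * e ^ p))).
  - rewrite fsum_scal_l, mgen_by_weight, mgen_multinomial by lia. easy.
  - intros p _. rewrite Mpoly_mcoef. destruct (Nat.leb_spec k p); [ring|].
    rewrite mcoef_below by lia. ring.
Qed.

(** * Expansion of [1 / (lam - v)] in powers of [e] *)

Lemma Cinv_geometric (x D : C) N : D <> 0 -> D - x <> 0 ->
  / (D - x) = fsum (fun n => x ^ n / D ^ S n) N + x ^ N / (D ^ N * (D - x)).
Proof.
  intros HD Hx. induction N as [|N IH]; cbn [fsum]; [simpl; field; auto|].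
  rewrite IH at 1. set (s := fsum _ N). simpl. field.
  repeat split; auto. apply Cpow_nz; exact HD.
Qed.

Section InverseExpansion.
Variables (r : nat) (t : nat -> C) (D : C).
Hypothesis HD : D <> 0.

(* The coefficient [g_p] of [e^p] in the expansion of [1 / (D - delta r t e)]. *)
Definition inv_coef (p : nat) : C := fsum (fun n => Mpoly r t n p / D ^ S n) (S r).

Definition inv_taylor (e : C) : C := fsum (fun p => inv_coef p * e ^ p) (S r).

Lemma delta_0 : delta r t 0 = 0.
Proof. apply fsum_eq0. intros i _. simpl. ring. Qed.

Lemma lim_delta : filterlim (delta r t) (locally' (0 : C)) (locally (0 : C)).
Proof.
  rewrite <- delta_0 at 2. apply lim_fsum. intros i _.
  apply lim_Cmult; [apply filterlim_const | apply lim_Cpow, lim_id0].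
Qed.

Lemma inv_taylor_rem (e : C) : D - delta r t e <> 0 ->
  / (D - delta r t e) = inv_taylor e
    + e ^ S r * (fsum (fun i => inv_coef (S r + i) * e ^ i) (r * r)
                 + fsum (fun i => t (S i) * e ^ i) r ^ S r / (D ^ S r * (D - delta r t e))).
Proof.
  intros Hd. rewrite (Cinv_geometric (delta r t e) D (S r)) by assumption.
  assert (Hdelta : delta r t e = e * fsum (fun i => t (S i) * e ^ i) r).
  { unfold delta. rewrite <- fsum_scal_l. apply fsum_ext. intros i _. simpl. ring. }
  rewrite (fsum_ext _ (fun n => fsum (fun p => Mpoly r t n p * e ^ p / D ^ S n) (S ((1 + r) * r)))).
  2:{ intros n Hn. rewrite <- Mpoly_expand with (J := ((1 + r) * r)%nat) by nia.
      unfold Cdiv. rewrite fsum_scal_r. easy. }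
  rewrite fsum_swap.
  replace (S ((1 + r) * r)) with (S r + r * r)%nat by lia. rewrite fsum_add.
  assert (Hterm : forall p,
            fsum (fun n => Mpoly r t n p * e ^ p / D ^ S n) (S r) = inv_coef p * e ^ p).
  { intros p. unfold inv_coef. rewrite <- fsum_scal_r. apply fsum_ext. intros n _.
    unfold Cdiv. ring. }
  rewrite (fsum_ext _ (fun p => inv_coef p * e ^ p) (S r)) by (intros p _; apply Hterm).
  rewrite (fsum_ext _ (fun i => e ^ S r * (inv_coef (S r + i) * e ^ i)) (r * r))
    by (intros i _; rewrite Hterm, Cpow_add_r; ring).
  rewrite fsum_scal_l, Hdelta, Cpow_mult_l. unfold inv_taylor. field.
  rewrite <- Hdelta. split; [exact Hd | apply Cpow_nz; exact HD].
Qed.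

Lemma lim_inv_taylor_rem :
  filterlim (fun e => (/ (D - delta r t e) - inv_taylor e) / e ^ r)
    (locally' (0 : C)) (locally (0 : C)).
Proof.
  assert (Hlim : filterlim (fun e => D - delta r t e) (locally' (0 : C)) (locally (D - 0)))
    by (apply lim_Cminus; [apply filterlim_const | apply lim_delta]).
  assert (HD0 : D - 0 <> 0) by (replace (D - 0) with D by ring; exact HD).
  set (rho := fun e => fsum (fun i => inv_coef (S r + i) * e ^ i) (r * r)
               + fsum (fun i => t (S i) * e ^ i) r ^ S r / (D ^ S r * (D - delta r t e))).
  apply (filterlim_ext_loc (fun e => e * rho e)).
  - apply (filter_imp (fun e => D - delta r t e <> 0 /\ e <> 0));
      [| exact (filter_and _ _ (lim_eventually_neq0 _ _ Hlim HD0) (locally'_neq 0))].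
    intros e [Hd He]. rewrite inv_taylor_rem by exact Hd. unfold rho.
    change (e ^ S r) with (e * e ^ r). field. repeat split; try apply Cpow_nz; auto.
  - replace (0 : C) with (0 * rho 0) at 2 by ring.
    apply lim_Cmult; [apply lim_id0|]. unfold rho. rewrite delta_0.
    apply lim_Cplus; [apply lim_poly0|]. apply lim_Cdiv; [apply lim_Cpow, lim_poly0| |].
    + apply lim_Cmult; [apply filterlim_const | exact Hlim].
    + apply Cmult_neq_0; [apply Cpow_nz|]; assumption.
Qed.
End InverseExpansion.

(** * Asymptotic expansions *)

Lemma Cpowz_sub (e : C) q lo : e <> 0 -> Cpowz e (Z.of_nat q - Z.of_nat lo) = e ^ q / e ^ lo.
Proof.
  intros He. assert (Hpow := Cpow_nz e). destruct (le_lt_dec lo q) as [Hle|Hlt].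
  - rewrite <- Nat2Z.inj_sub by exact Hle. replace q with ((q - lo) + lo)%nat at 2 by lia.
    rewrite Cpow_add_r. destruct (q - lo)%nat as [|n]; cbn [Cpowz Z.of_nat];
      rewrite ?SuccNat2Pos.id_succ; field; auto.
  - replace (Z.of_nat q - Z.of_nat lo)%Z with (Z.neg (Pos.of_succ_nat (lo - q - 1))) by lia.
    cbn [Cpowz]. rewrite SuccNat2Pos.id_succ. replace (S (lo - q - 1)) with (lo - q)%nat by lia.
    replace lo with (q + (lo - q))%nat at 2 by lia. rewrite Cpow_add_r. field. auto.
Qed.

(* [head_poly c lo e / e ^ lo] is the part of order [<= 0] of the expansion [sum_n c n e^n]. *)
Definition head_poly (c : Z -> C) (lo : nat) (e : C) : C :=
  fsum (fun q => c (Z.of_nat q - Z.of_nat lo)%Z * e ^ q) (S lo).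

Lemma asymp_head (f : C -> C) lo c : asymp f lo c ->
  filterlim (fun e => f e - head_poly c lo e / e ^ lo) (locally' (0 : C)) (locally (0 : C)).
Proof.
  intros Hf. eapply filterlim_ext_loc; [| exact (Hf 0%nat)].
  apply (filter_imp (fun e : C => e <> 0)); [| apply locally'_neq].
  intros e He. rewrite csum_fsum, Nat.add_0_r, Nat.sub_0_r.
  rewrite (fsum_ext _ (fun q => c (Z.of_nat q - Z.of_nat lo)%Z * e ^ q * / e ^ lo))
    by (intros q _; rewrite Nat.add_0_l, Cpowz_sub by exact He; unfold Cdiv; ring).
  rewrite fsum_scal_r. unfold head_poly. change (e ^ 0) with (1 : C). field. apply Cpow_nz, He.
Qed.

Lemma lim_asymp_scaled (f : C -> C) lo c : asymp f lo c ->
  filterlim (fun e => e ^ lo * f e) (locally' (0 : C)) (locally (c (- Z.of_nat lo)%Z)).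
Proof.
  intros Hf.
  apply (filterlim_ext_loc
           (fun e => e ^ lo * (f e - head_poly c lo e / e ^ lo) + head_poly c lo e)).
  - apply (filter_imp (fun e : C => e <> 0)); [| apply locally'_neq].
    intros e He. field. apply Cpow_nz, He.
  - replace (c (- Z.of_nat lo)%Z) with (0 ^ lo * 0 + head_poly c lo 0).
    + apply lim_Cplus; [| apply lim_poly0].
      apply lim_Cmult; [apply lim_Cpow, lim_id0 | apply asymp_head, Hf].
    + unfold head_poly. rewrite fsum_Sl, fsum_eq0 by (intros; simpl; ring). simpl. ring.
Qed.

(* The poles of [A_k] are those of [e^k C] with opposite sign. *)
Lemma head_poly_cancel r k (W : Z -> Mat) (Ac : nat -> nat -> Mat) a b (e : C) : (k < r)%nat ->
  head_poly (Acoefs W Ac k a b) (r - k) e + head_poly (fun n => W n a b) r e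
  = e ^ (r - k) * (Atil r W Ac k a b
                   + e * fsum (fun i => W (Z.of_nat (S (r - k + i)) - Z.of_nat r)%Z a b * e ^ i) k).
Proof.
  intros Hk. unfold head_poly. set (d := (r - k)%nat).
  assert (Hr : r = (d + k)%nat) by lia.
  replace (S r) with (S d + k)%nat by lia. rewrite fsum_add, Cplus_assoc, <- fsum_plus.
  cbn [fsum]. rewrite fsum_eq0, <- fsum_scal_l, Cmult_plus_distr_l, <- fsum_scal_l.
  - unfold Acoefs, Atil. rewrite Z.sub_diag. cbn [Z.ltb Z.compare Z.to_nat].
    destruct (Nat.ltb_spec k r); [|lia].
    replace (Z.of_nat d - Z.of_nat r)%Z with (- Z.of_nat k)%Z by lia.
    f_equal; [ring|]. apply fsum_ext. intros i _.
    change (S d + i)%nat with (S (d + i)). cbn [Cpow]. rewrite Cpow_add_r. ring.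
  - intros q Hq. unfold Acoefs. destruct (Z.ltb_spec (Z.of_nat q - Z.of_nat d) 0); [|lia].
    replace (Z.of_nat q - Z.of_nat d - Z.of_nat k)%Z with (Z.of_nat q - Z.of_nat r)%Z by lia.
    ring.
Qed.

Lemma lim_A_plus_C r k (W : Z -> Mat) (Ac : nat -> nat -> Mat) a b (f g : C -> C) : (k < r)%nat ->
  asymp f (r - k) (Acoefs W Ac k a b) -> asymp g r (fun n => W n a b) ->
  filterlim (fun e => f e + e ^ k * g e) (locally' (0 : C)) (locally (Atil r W Ac k a b)).
Proof.
  intros Hk Hf Hg.
  set (Q := fun e => fsum (fun i => W (Z.of_nat (S (r - k + i)) - Z.of_nat r)%Z a b * e ^ i) k).
  apply (filterlim_ext_loc (fun e => (f e - head_poly (Acoefs W Ac k a b) (r - k) e / e ^ (r - k))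
                                     + e ^ k * (g e - head_poly (fun n => W n a b) r e / e ^ r)
                                     + (Atil r W Ac k a b + e * Q e))).
  - apply (filter_imp (fun e : C => e <> 0)); [| apply locally'_neq]. intros e He.
    assert (Hpow : e ^ r = e ^ (r - k) * e ^ k) by (rewrite <- Cpow_add_r; f_equal; lia).
    assert (Hcancel := head_poly_cancel r k W Ac a b e Hk). fold (Q e) in Hcancel.
    replace (Atil r W Ac k a b + e * Q e)
      with ((head_poly (Acoefs W Ac k a b) (r - k) e + head_poly (fun n => W n a b) r e)
            / e ^ (r - k))
      by (rewrite Hcancel; field; apply Cpow_nz, He).
    rewrite Hpow. field. split; apply Cpow_nz, He.
  - replace (locally (Atil r W Ac k a b))
      with (locally (0 + 0 ^ k * 0 + (Atil r W Ac k a b + 0 * Q 0))) by (f_equal; ring).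
    apply lim_Cplus; [apply lim_Cplus|].
    + apply asymp_head, Hf.
    + apply lim_Cmult; [apply lim_Cpow, lim_id0 | apply asymp_head, Hg].
    + apply lim_Cplus; [apply filterlim_const | apply lim_Cmult; [apply lim_id0 | apply lim_poly0]].
Qed.

(** * The limit of the connection *)

Lemma fsum_Mpoly_swap r t (D : C) (X : nat -> C) n :
  fsum (fun k => fsum (fun p => X p * Mpoly r t k p) n / D ^ S k) (S r)
  = fsum (fun p => X p * inv_coef r t D p) n.
Proof.
  unfold Cdiv. rewrite (fsum_ext _ (fun k => fsum (fun p => X p * Mpoly r t k p * / D ^ S k) n))
    by (intros k _; now rewrite fsum_scal_r).
  rewrite fsum_swap. apply fsum_ext. intros p _.
  unfold inv_coef, Cdiv. rewrite <- fsum_scal_l. apply fsum_ext. intros k _. ring.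
Qed.

Lemma sum_Btil r t W Ac (D : C) a b :
  csum (fun i => Btil r t W Ac i a b / Cpow D (S i)) 0 r
  = fsum (fun p => Atil r W Ac p a b * inv_coef r t D p) (S r).
Proof.
  rewrite <- fsum_Mpoly_swap, csum_fsum, Nat.sub_0_r. apply fsum_ext. intros i Hi.
  unfold Btil.
  rewrite csum_fsum, Nat.add_0_l, (fsum_drop_zeros (fun p => Atil r W Ac p a b * Mpoly r t i p))
    by
    (lia || (intros p Hp; rewrite Mpoly_below by exact Hp; ring)).
  easy.
Qed.

Lemma sum_Bk r t A (e D : C) a b :
  csum (fun k => Bk (S r) t A k e a b / Cpow D (S k)) 0 (S r - 1)
  = fsum (fun p => A p e a b * inv_coef (S r) t D p) (S r).
Proof.
  rewrite <- fsum_Mpoly_swap, fsum_S, (fsum_eq0 (fun p => _ * Mpoly (S r) t (S r) p))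
    by (intros p Hp; rewrite Mpoly_below by exact Hp; ring).
  replace (S r - 1)%nat with r by lia. rewrite csum_fsum, Nat.sub_0_r.
  unfold Cdiv at 3. rewrite Cmult_0_l, Cplus_0_r. apply fsum_ext. intros k Hk.
  unfold Bk. replace (S r - 1)%nat with r by lia.
  rewrite csum_fsum, Nat.add_0_l, (fsum_drop_zeros (fun p => A p e a b * Mpoly r t k p))
    by (lia || (intros p Hp; rewrite Mpoly_below by exact Hp; ring)).
  f_equal. apply fsum_ext. intros p Hp. rewrite Mpoly_trunc by lia. easy.
Qed.

Lemma vpt_delta r u t (e : C) : vpt r u t e = u + delta r t e.
Proof.
  unfold vpt, delta. rewrite csum_fsum. replace (S r - 1)%nat with r by lia. easy.
Qed.

Lemma conn_split r u t A Cm H (lam e : C) a b : e <> 0 ->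
  conn (S r) u t A Cm H e lam a b =
    fsum (fun p => (A p e a b + e ^ p * Cm e a b) * inv_coef (S r) t (lam - u) p) (S r)
    + e ^ S r * Cm e a b * inv_coef (S r) t (lam - u) (S r)
    + e ^ S r * Cm e a b
      * ((/ (lam - u - delta (S r) t e) - inv_taylor (S r) t (lam - u) e) / e ^ S r)
    + H e lam a b.
Proof.
  intros He. unfold conn, inv_taylor. rewrite sum_Bk, vpt_delta, (fsum_S _ (S r)).
  replace (lam - (u + delta (S r) t e)) with (lam - u - delta (S r) t e) by ring.
  rewrite (fsum_ext (fun p => (A p e a b + e ^ p * Cm e a b) * inv_coef (S r) t (lam - u) p)
                    (fun p => A p e a b * inv_coef (S r) t (lam - u) p
                                + Cm e a b * (inv_coef (S r) t (lam - u) p * e ^ p)))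
    by (intros p _; ring).
  rewrite fsum_plus, fsum_scal_l. unfold Cdiv.
  set (inv := / (lam - u - delta (S r) t e)). field. apply Cpow_nz, He.
Qed.

Theorem theorem0p6 :
  forall (m r : nat) (u : C) (t : nat -> C)
         (A : nat -> C -> Mat) (Cm : C -> Mat) (H : C -> C -> Mat) (H0 : C -> Mat)
         (W : Z -> Mat) (Ac : nat -> nat -> Mat),
  (1 <= m)%nat -> (1 <= r)%nat ->
  (* C ~ sum_{j >= -r} W^{[j]} eps^j *)
  (forall a b, (a < m)%nat -> (b < m)%nat ->
     asymp (fun e => Cm e a b) r (fun n => W n a b)) ->
  (* A_k ~ - sum_{l=1}^{r-k} W^{[-k-l]} eps^{-l} + sum_{l >= 0} A^{[k,l]} eps^l *)
  (forall k a b, (k < r)%nat -> (a < m)%nat -> (b < m)%nat ->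
     asymp (fun e => A k e a b) (r - k) (Acoefs W Ac k a b)) ->
  (* the remaining terms are holomorphic at lambda = u and lambda = v *)
  (forall a b, (a < m)%nat -> (b < m)%nat ->
     locally' (0 : C) (fun e => holo_at (fun lam => H e lam a b) u /\
                                holo_at (fun lam => H e lam a b) (vpt r u t e))) ->
  (* ... and have a finite limit H0 *)
  (forall lam a b, (a < m)%nat -> (b < m)%nat ->
     filterlim (fun e => H e lam a b) (locally' (0 : C)) (locally (H0 lam a b))) ->
  forall lam : C, lam <> u ->
  forall a b, (a < m)%nat -> (b < m)%nat ->
    filterlim (fun e => conn r u t A Cm H e lam a b) (locally' (0 : C))
      (locally (csum (fun i => Btil r t W Ac i a b / Cpow (lam - u) (S i)) 0 r
                + H0 lam a b)).
Proof.
  intros m r u t A Cm H H0 W Ac _ Hr HC HA _ HH0 lam Hlam a b Ha Hb.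
  destruct r as [|r]; [lia|].
  assert (HD := Cminus_eq_contra _ _ Hlam).
  set (g := inv_coef (S r) t (lam - u)).
  assert (Htarget :
            csum (fun i => Btil (S r) t W Ac i a b / Cpow (lam - u) (S i)) 0 (S r) + H0 lam a b
          = fsum (fun p => Atil (S r) W Ac p a b * g p) (S r)
            + W (- Z.of_nat (S r))%Z a b * g (S r) + W (- Z.of_nat (S r))%Z a b * 0 + H0 lam a b).
  { rewrite sum_Btil, fsum_S. unfold Atil at 2, g. rewrite Nat.ltb_irrefl. ring. }
  rewrite Htarget.
  apply (filterlim_ext_loc (fun e =>
    fsum (fun p => (A p e a b + e ^ p * Cm e a b) * g p) (S r)
    + e ^ S r * Cm e a b * g (S r)
    + e ^ S r * Cm e a b
      * ((/ (lam - u - delta (S r) t e) - inv_taylor (S r) t (lam - u) e) / e ^ S r)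
    + H e lam a b)).
  { apply (filter_imp (fun e : C => e <> 0)); [| apply locally'_neq].
    intros e He. symmetry. apply conn_split, He. }
  apply lim_Cplus; [apply lim_Cplus; [apply lim_Cplus|] |].
  - apply lim_fsum. intros p Hp. apply lim_Cmult; [| apply filterlim_const].
    apply lim_A_plus_C; auto.
  - apply lim_Cmult; [| apply filterlim_const].
    apply (lim_asymp_scaled _ _ (fun n => W n a b)), HC; assumption.
  - apply lim_Cmult; [| apply lim_inv_taylor_rem, HD].
    apply (lim_asymp_scaled _ _ (fun n => W n a b)), HC; assumption.
  - apply HH0; assumption.
Qed.
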